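(* For any $\Delta, k \in \mathbb{N}$ and $\xi > 0$ there exist $\beta > 0$ and $n_0 \in \mathbb{N}$ such that the following holds. Let $H$ be a bipartite graph on $n \geq n_0$ vertices with bandwidth at most $\beta n$ and $\Delta(H) \leq \Delta$. Let $n_1, n_2, \dots, n_{2k}$ be an integer partition of $n$ such that $n_i > n/(3k)$ for all $1 \leq i \leq 2k$ and $|n_{2i-1} - n_{2i}| \ll \xi n$ for all $1 \leq i \leq k$. Let $C$ be the cycle $1 2 \dots (2k) 1$ on vertex set $[2k]$ and let $c = \{2i_1, 2i_2\}$ be a chord of $C$ for some distinct $1 \leq i_1, i_2 \leq k$. Then there exist a set $S \subseteq V(H)$ and a graph homomorphism $f : H \to C \cup \{c\}$ such that: ($\beta_1$) $|S| \leq \xi n$; ($\beta_2$) $|f^{-1}(i)| \leq n_i + \xi n$ for all $1 \leq i \leq 2k$; ($\beta_3$) every edge of $H$ not in $H[S]$ is mapped to an edge $\{2i-1, 2i\}$ for some $1 \leq i \leq k$.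
   Context: The hypothesis $|n_{2i-1} - n_{2i}| \ll \xi n$ means $|n_{2i-1}-n_{2i}| \leq \lambda n$ for a constant $\lambda>0$ chosen sufficiently small relative to $\xi$. A graph $H$ on $n$ vertices has bandwidth at most $b$ if there is a labelling of its vertices by $1,\dots,n$ such that $|i-j| \leq b$ for every edge $ij$. $C \cup \{c\}$ denotes the graph obtained from the cycle $C$ by adding the edge $c$; a graph homomorphism maps edges to edges. *)

From HB Require Import structures.
From mathcomp Require Import all_boot all_order all_algebra.
From mathcomp Require Import fingroup perm reals.
Set Implicit Arguments. Unset Strict Implicit. Unset Printing Implicit Defensive.
Import Order.TTheory GRing.Theory Num.Theory.
Local Open Scope ring_scope.

Definition simple_graph (n : nat) (e : rel 'I_n) : Prop :=
  irreflexive e /\ symmetric e.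

Definition bipartite (n : nat) (e : rel 'I_n) : Prop :=
  exists c : 'I_n -> bool, forall u v, e u v -> c u != c v.

Definition max_deg_le (n : nat) (e : rel 'I_n) (D : nat) : Prop :=
  forall v, (#|[set u | e v u]| <= D)%N.

Definition bandwidth_le (R : realType) (n : nat) (e : rel 'I_n) (b : R) : Prop :=
  exists s : {perm 'I_n}, forall u v, e u v ->
    `| ((s u : nat)%:R : R) - (s v : nat)%:R | <= b.

Definition cycle_edge (k a b : nat) : bool :=
  [|| [&& (1 <= a)%N, b == a.+1 & (b <= 2 * k)%N],
      [&& (1 <= b)%N, a == b.+1 & (a <= 2 * k)%N],
      (a == 1%N) && (b == 2 * k)%N
    | (a == 2 * k)%N && (b == 1%N)].

Definition chord_edge (i1 i2 a b : nat) : bool :=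
  ((a == 2 * i1) && (b == 2 * i2))%N || ((a == 2 * i2) && (b == 2 * i1))%N.

Definition hom_to_cycle_chord (n : nat) (e : rel 'I_n) (k i1 i2 : nat)
    (f : 'I_n -> nat) : Prop :=
  (forall v, (1 <= f v <= 2 * k)%N) /\
  (forall u v, e u v -> cycle_edge k (f u) (f v) || chord_edge i1 i2 (f u) (f v)).

From HB Require Import structures.
From mathcomp Require Import all_boot all_order all_algebra.
From mathcomp Require Import fingroup perm reals.
From mathcomp Require Import zify ring lra.
Set Implicit Arguments. Unset Strict Implicit. Unset Printing Implicit Defensive.

(* Order the vertices of H along a labelling of small bandwidth w and cut this
   order into blocks of length M >> w.  Each block is assigned the pair
   {2i-1, 2i} whose share of the partition contains the block's first position,
   and the bulk of the block is mapped onto the edge {2i-1, 2i}, the two colour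
   classes of H going to its two ends in one of two orientations.  The first
   D w positions of a block (D = 12k + 3) form its transition region S: cut
   into D zones of length w, it lets the image edge walk, one zone at a time,
   from the edge of the previous block back to {1, 2} and then on to the edge
   of the current block.  Reversing the orientation needs an odd closed walk,
   which the chord provides.  Within each pair, the orientation is switched at
   a threshold block chosen by a discrete intermediate value argument, so that
   both colour classes of the pair's blocks are split evenly between 2i-1 and
   2i; this gives (beta_2) since n_(2i-1) and n_(2i) are almost equal. *)

Lemma rev_belast_path (T : Type) (e : rel T) x p : symmetric e ->
  path e x p -> path e (last x p) (rev (belast x p)).
Proof. by move=> eC; rewrite rev_path; apply: sub_path => y z; rewrite eC. Qed.

Lemma last_rev_belast (T : Type) (x : T) p : last (last x p) (rev (belast x p)) = x.
Proof. by case: p => //= y p; rewrite rev_cons last_rcons. Qed.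

Lemma path_nth_refl (T : Type) (e : rel T) x p y i :
  path e x p -> last x p = y -> e y y -> e (nth y (x :: p) i) (nth y (x :: p) i.+1).
Proof.
move=> xp_path xp_last eyy; have [ltip|] := ltnP i (size p).
  exact: (pathP y xp_path).
rewrite leq_eqVlt => /orP[/eqP <-|ltpi].
  by rewrite -last_nth xp_last /= nth_default.
by rewrite !nth_default //= ltnW.
Qed.

Section TargetGraph.
Variables k i1 i2 : nat.

Definition target_edge (a b : nat) : bool :=
  cycle_edge k a b || chord_edge i1 i2 a b.

Lemma target_edgeC a b : target_edge a b = target_edge b a.
Proof. by rewrite /target_edge /cycle_edge /chord_edge; apply/idP/idP; lia. Qed.

(* A state [x] sends the vertices of colour [true] of a zone to [x.1] and those
   of colour [false] to [x.2]; [state_adj x y] means that this respects the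
   edges inside a zone with state [x] and towards a next zone with state [y]. *)
Definition state_adj (x y : nat * nat) : bool :=
  [&& target_edge x.1 x.2, target_edge y.1 y.2,
      target_edge x.1 y.2 & target_edge x.2 y.1].

Lemma state_adjC : symmetric state_adj.
Proof.
by move=> x y; rewrite /state_adj (target_edgeC y.1 x.2) (target_edgeC y.2 x.1); lia.
Qed.

Lemma state_adj_swap : {mono swap_pair : x y / state_adj x y}.
Proof.
move=> x y; rewrite /state_adj /swap_pair /=.
by rewrite (target_edgeC x.2 x.1) (target_edgeC y.2 y.1); lia.
Qed.

Definition state (p : nat) (o : bool) : nat * nat :=
  if o then ((2 * p).-1, 2 * p) else (2 * p, (2 * p).-1).

Lemma swap_state p : swap_pair (state p true) = state p false.
Proof. by []. Qed.

Lemma target_edge_pair p : (1 <= p <= k)%N -> target_edge (2 * p).-1 (2 * p).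
Proof. by move=> p_range; apply/orP; left; rewrite /cycle_edge; lia. Qed.

Lemma target_edge_chord : target_edge (2 * i2) (2 * i1).
Proof. by apply/orP; right; rewrite /chord_edge !eqxx orbT. Qed.

Lemma state_adjxx p o : (1 <= p <= k)%N -> state_adj (state p o) (state p o).
Proof.
move=> p_range; have pair_edge := target_edge_pair p_range.
by case: o; rewrite /state_adj /state /= ?(target_edgeC (2 * p)) pair_edge.
Qed.

Fixpoint descent (m : nat) : seq (nat * nat) :=
  if m is m'.+1 then (2 * m' + 3, 2 * m' + 2) :: state m'.+1 true :: descent m'
  else [::].

Lemma size_descent m : size (descent m) = (2 * m)%N.
Proof. by elim: m => //= m ->; lia. Qed.

Lemma descent_walk m : (m < k)%N ->
  path state_adj (state m.+1 true) (descent m) /\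
  last (state m.+1 true) (descent m) = state 1 true.
Proof.
elim: m => [|m IH] ltmk //=; have [IHpath IHlast] := IH (ltnW ltmk).
rewrite IHpath IHlast andbT; split => //.
by rewrite /state_adj /state /target_edge /cycle_edge /chord_edge /=; lia.
Qed.

Hypotheses (i1_range : (1 <= i1 <= k)%N) (i2_range : (1 <= i2 <= k)%N).

Lemma target_edge_range a b :
  target_edge a b -> (1 <= a <= 2 * k)%N /\ (1 <= b <= 2 * k)%N.
Proof. by rewrite /target_edge /cycle_edge /chord_edge; lia. Qed.

(* The only place where the chord is used: it closes an odd cycle, which is
   needed to exchange the images of the two colour classes. *)
Definition switch_walk : seq (nat * nat) :=
  rev (belast (state i2 false) (map swap_pair (descent i2.-1)))
  ++ (2 * i2, 2 * i1) :: state i1 true :: descent i1.-1.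

Lemma switch_walk_path :
  path state_adj (state 1 false) switch_walk /\
  last (state 1 false) switch_walk = state 1 true.
Proof.
have [down1_path down1_last] := descent_walk (m := i1.-1) ltac:(lia).
have [down2_path down2_last] := descent_walk (m := i2.-1) ltac:(lia).
have i1E : i1.-1.+1 = i1 by lia.
have i2E : i2.-1.+1 = i2 by lia.
rewrite i1E in down1_path down1_last; rewrite i2E in down2_path down2_last.
set up2 := map swap_pair (descent i2.-1).
have up2_path : path state_adj (state i2 false) up2.
  by rewrite -swap_state (mono_path state_adj_swap).
have up2_last : last (state i2 false) up2 = state 1 false.
  by rewrite -swap_state last_map down2_last.
have := rev_belast_path state_adjC up2_path; rewrite up2_last => rev_up2_path.
have rev_up2_last :
    last (state 1 false) (rev (belast (state i2 false) up2)) = state i2 false.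
  by rewrite -up2_last last_rev_belast.
rewrite /switch_walk cat_path last_cat rev_up2_path rev_up2_last /=.
rewrite down1_path down1_last andbT; split => //.
rewrite /state_adj /state /= target_edge_chord.
by rewrite (target_edgeC (2 * i2)) (target_edgeC (2 * i1)) !target_edge_pair.
Qed.

Definition home_walk (p : nat) (o : bool) : seq (nat * nat) :=
  if o then descent p.-1 else map swap_pair (descent p.-1) ++ switch_walk.

Lemma home_walk_path p o : (1 <= p <= k)%N ->
  path state_adj (state p o) (home_walk p o) /\
  last (state p o) (home_walk p o) = state 1 true.
Proof.
move=> p_range; have [down_path down_last] := descent_walk (m := p.-1) ltac:(lia).
have pE : p.-1.+1 = p by lia.
rewrite pE in down_path down_last; case: o; rewrite /home_walk; first by [].
have [switch_path switch_last] := switch_walk_path.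
rewrite cat_path last_cat -swap_state last_map down_last (mono_path state_adj_swap).
by rewrite down_path swap_state switch_path switch_last.
Qed.

Lemma size_home_walk p o : (p <= k)%N -> (size (home_walk p o) <= 6 * k)%N.
Proof.
move=> lepk; rewrite /home_walk /switch_walk; case: o;
  rewrite ?size_cat ?size_rev ?size_belast /= ?size_map !size_descent; lia.
Qed.

Variables (pair_of : nat -> nat) (orient : nat -> bool).

Definition block_state (b : nat) : nat * nat := state (pair_of b) (orient b).

Definition admissible (b : nat) : bool :=
  (1 <= pair_of b.-1 <= k) && (1 <= pair_of b <= k).

Definition transition (b : nat) : seq (nat * nat) :=
  block_state b.-1 :: home_walk (pair_of b.-1) (orient b.-1)
  ++ rev (belast (block_state b) (home_walk (pair_of b) (orient b))).

(* A transition has at most [12 k + 1] steps; the two extra zones make the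
   last two zones of a block carry the block's own state. *)
Local Notation D := (12 * k + 3)%N.

(* Block [b] of the schedule consists of the zones [b * (D + 1) + t], [t <= D],
   which follow the transition from the state of block [b - 1] to that of block
   [b], padded with the latter. *)
Definition schedule (z : nat) : nat * nat :=
  nth (block_state (z %/ D.+1)) (transition (z %/ D.+1)) (z %% D.+1).

Lemma transition_walk b : admissible b ->
  path state_adj (block_state b.-1) (behead (transition b)) /\
  last (block_state b.-1) (behead (transition b)) = block_state b /\
  (size (transition b) < D.-1)%N.
Proof.
case/andP=> prev_range cur_range; rewrite /transition /block_state /=.
have [prev_path prev_last] := home_walk_path (orient b.-1) prev_range.
have [cur_path cur_last] := home_walk_path (orient b) cur_range.
have := rev_belast_path state_adjC cur_path; rewrite cur_last => rev_cur_path.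
have rev_cur_last : last (state 1 true)
      (rev (belast (state (pair_of b) (orient b)) (home_walk (pair_of b) (orient b))))
    = state (pair_of b) (orient b).
  by rewrite -cur_last last_rev_belast.
rewrite cat_path last_cat prev_path prev_last rev_cur_path rev_cur_last.
split=> //; split=> //; rewrite size_cat size_rev size_belast.
have := size_home_walk (orient b.-1) (p := pair_of b.-1).
by have := size_home_walk (orient b) (p := pair_of b); lia.
Qed.

Lemma scheduleE b t : (t <= D)%N ->
  schedule (b * D.+1 + t) = nth (block_state b) (transition b) t.
Proof.
move=> letD; have ltt : (t < D.+1)%N := letD.
by rewrite /schedule divnMDl // modnMDl (divn_small ltt) (modn_small ltt) addn0.
Qed.

Lemma schedule_block_end b t : admissible b -> (D.-1 <= t <= D)%N ->
  schedule (b * D.+1 + t) = block_state b.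
Proof.
move=> adm t_range; have [_ [_ walk_size]] := transition_walk adm.
by rewrite scheduleE ?nth_default //; lia.
Qed.

Lemma schedule_block_start b : schedule (b.+1 * D.+1) = block_state b.
Proof. by rewrite -[b.+1 * D.+1]addn0 scheduleE. Qed.

Lemma schedule_adj b t : admissible b -> (t <= D)%N ->
  state_adj (schedule (b * D.+1 + t)) (schedule (b * D.+1 + t).+1).
Proof.
move=> adm; case/andP: (adm) => _ cur_range.
have cur_adj := state_adjxx (orient b) cur_range.
rewrite leq_eqVlt => /orP[/eqP ->|ltD].
  have -> : (b * D.+1 + D).+1 = (b.+1 * D.+1)%N by rewrite mulSn; lia.
  by rewrite schedule_block_start (@schedule_block_end b D adm) //; lia.
have [walk_path [walk_last _]] := transition_walk adm.
rewrite -[(b * D.+1 + t).+1]addnS !scheduleE ?(ltnW ltD) //.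
have -> : transition b = block_state b.-1 :: behead (transition b) by [].
exact: path_nth_refl walk_path walk_last cur_adj.
Qed.

End TargetGraph.

Lemma card_le_injective_range (T : finType) (g : T -> nat) (A : {set T}) lo hi :
  {in A &, injective g} -> (forall v, v \in A -> lo <= g v < hi)%N ->
  (#|A| <= hi - lo)%N.
Proof.
move=> g_inj g_range; rewrite cardE -(size_map g) -(size_iota lo (hi - lo)).
apply: uniq_leq_size.
  by rewrite map_inj_in_uniq ?enum_uniq // => x y; rewrite !mem_enum; exact: g_inj.
by move=> x /mapP[v]; rewrite mem_enum => /g_range v_range ->; rewrite mem_iota; lia.
Qed.

Lemma discrete_ivt (h : nat -> nat) m T N :
  (forall F, h F.+1 <= h F + m /\ h F <= h F.+1 + m)%N ->
  (h 0 <= T <= h N \/ h N <= T <= h 0)%N ->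
  exists F, (T <= h F + m /\ h F <= T + m)%N.
Proof.
move=> h_step; elim: N => [|N IH] T_between; first by exists 0%N; lia.
have [step_up step_down] := h_step N.
have [T_before|T_last] : (h 0 <= T <= h N \/ h N <= T <= h 0)%N \/
    (h N < T <= h N.+1 \/ h N.+1 <= T < h N)%N by lia.
  exact: IH.
by exists N.+1; lia.
Qed.

Definition segment_of (C : nat -> nat) (k x : nat) : nat :=
  find (fun j => x < C j)%N (iota 0 k.+1).

Lemma segment_ofP (C : nat -> nat) k x : C 0 = 0%N -> (x < C k)%N ->
  (1 <= segment_of C k x <= k)%N /\
  (C (segment_of C k x).-1 <= x < C (segment_of C k x))%N.
Proof.
move=> C0 ltxk; rewrite /segment_of; set j := find _ _.
have has_j : has (fun j => x < C j)%N (iota 0 k.+1).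
  by apply/hasP; exists k => //; rewrite mem_iota; lia.
have ltjk : (j < k.+1)%N by move: has_j; rewrite has_find size_iota.
have := nth_find 0%N has_j; rewrite -/j nth_iota // add0n => ltxj.
have j_gt0 : (0 < j)%N by rewrite lt0n; apply/eqP => j0; move: ltxj; rewrite j0 C0.
have ltj1 : (j.-1 < j)%N by lia.
have := before_find 0%N ltj1; rewrite nth_iota /=; last by lia.
by rewrite add0n => not_ltxj1; split; lia.
Qed.

Section Zones.
Variables D M w : nat.
Hypotheses (w_gt0 : (0 < w)%N) (zones_fit : (D.+1 * w <= M)%N).

(* Positions are cut into blocks of length [M]; the first [D * w] positions of
   a block form [D] zones of length [w] and the rest of the block one last zone. *)
Definition zone (p : nat) : nat := (p %/ M * D.+1 + minn (p %% M %/ w) D)%N.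

Lemma M_gt0 : (0 < M)%N.
Proof. by apply: leq_trans zones_fit; rewrite muln_gt0 w_gt0. Qed.

Lemma zone_step p q : (p <= q < p + w)%N -> zone q = zone p \/ zone q = (zone p).+1.
Proof.
case/andP=> lepq ltq; rewrite /zone.
have le_wM : (w <= M)%N by apply: leq_trans zones_fit; rewrite leq_pmull.
have p_eq := divn_eq p M; have q_eq := divn_eq q M.
have ltrp := ltn_pmod p M_gt0; have ltrq := ltn_pmod q M_gt0.
set bp := (p %/ M)%N in p_eq *; set bq := (q %/ M)%N in q_eq *.
set rp := (p %% M)%N in p_eq ltrp *; set rq := (q %% M)%N in q_eq ltrq *.
have le_bpq : (bp <= bq)%N by apply: leq_div2r.
have lt_bqp : (bq < bp.+2)%N by rewrite /bq ltn_divLR ?M_gt0 // !mulSn; lia.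
have [bqE|bqE] : bq = bp \/ bq = bp.+1 by lia.
- have le_rpq : (rp <= rq < rp + w)%N by rewrite bqE in q_eq; lia.
  have le_zpq : (rp %/ w <= rq %/ w)%N by apply: leq_div2r; lia.
  have lt_zqp : (rq %/ w < (rp %/ w).+2)%N.
    by rewrite ltn_divLR // !mulSn; have := ltn_ceil rp w_gt0; rewrite mulSn; lia.
  by rewrite bqE; lia.
- have zq0 : (rq %/ w = 0)%N by rewrite divn_small //; rewrite bqE mulSn in q_eq; lia.
  have zp_last : (D <= rp %/ w)%N.
    rewrite leq_divRL //; rewrite bqE mulSn in q_eq.
    by move: zones_fit; rewrite mulSn; lia.
  by rewrite bqE zq0 mulSn; right; lia.
Qed.

Lemma zone_near_tail p q : (0 < D)%N -> (D * w <= p %% M)%N ->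
  (p <= q < p + w \/ q <= p < q + w)%N ->
  zone q = ((p %/ M).+1 * D.+1)%N \/
  exists2 t, (D.-1 <= t <= D)%N & zone q = (p %/ M * D.+1 + t)%N.
Proof.
move=> D_gt0 tail_p near_pq.
have zpE : zone p = (p %/ M * D.+1 + D)%N.
  by rewrite /zone; congr (_ + _)%N; apply/minn_idPr; rewrite leq_divRL.
have zp_last : (zone p).+1 = ((p %/ M).+1 * D.+1)%N by rewrite zpE mulSn; lia.
case: near_pq => near_pq.
  by case: (zone_step near_pq) => ->; [right; exists D; rewrite ?zpE; lia | left].
case: (zone_step near_pq) => zpq; right.
  by exists D; rewrite -?zpq ?zpE; lia.
by exists D.-1; [lia | move: zpq; rewrite zpE; lia].
Qed.

End Zones.

Section BlockLabelling.
Variables (n k i1 i2 w M : nat) (e : rel 'I_n) (c : 'I_n -> bool).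
Variables (s : {perm 'I_n}) (n_ : nat -> nat).
Local Notation D := (12 * k + 3)%N.
Hypotheses (w_gt0 : (0 < w)%N) (zones_fit : (D.+1 * w <= M)%N).
Hypothesis c_proper : forall u v, e u v -> c u != c v.
Hypothesis s_bandwidth : forall u v, e u v -> (s u < s v + w)%N /\ (s v < s u + w)%N.
Hypothesis sum_n : (\sum_(1 <= i < (2 * k).+1) n_ i)%N = n.
Hypotheses (i1_range : (1 <= i1 <= k)%N) (i2_range : (1 <= i2 <= k)%N).

Let M_pos : (0 < M)%N := M_gt0 w_gt0 zones_fit.

Definition prefix_size (j : nat) : nat := (\sum_(1 <= i < (2 * j).+1) n_ i)%N.

Lemma prefix_sizeE i : (0 < i)%N ->
  prefix_size i = (prefix_size i.-1 + n_ (2 * i).-1 + n_ (2 * i))%N.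
Proof.
case: i => // j _.
have -> : (2 * j.+1).-1 = (2 * j).+1 by lia.
rewrite /prefix_size (_ : (2 * j.+1).+1 = (2 * j).+3)%N; last by lia.
have -> : (2 * j.+1 = (2 * j).+2)%N by lia.
by rewrite big_nat_recr // big_nat_recr.
Qed.

Definition block_pair (b : nat) : nat := segment_of prefix_size k (b * M).

Definition block (v : 'I_n) : nat := (s v %/ M)%N.

Lemma block_pairP b : (b * M < n)%N ->
  (1 <= block_pair b <= k)%N /\
  (prefix_size (block_pair b).-1 <= b * M < prefix_size (block_pair b))%N.
Proof.
by move=> ltbn; apply: segment_ofP; [exact: big_geq | rewrite /prefix_size sum_n].
Qed.

Lemma admissible_block p : (p < n)%N -> admissible k block_pair (p %/ M).
Proof.
move=> ltpn; have le_bp : (p %/ M * M <= p)%N := leq_divM p M.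
have le_prev : ((p %/ M).-1 * M <= p %/ M * M)%N by rewrite leq_mul2r leq_pred orbT.
by apply/andP; split; apply: (block_pairP _).1; lia.
Qed.

Lemma block_pair_range v : (1 <= block_pair (block v) <= k)%N.
Proof. exact: (block_pairP (leq_ltn_trans (leq_divM _ _) (ltn_ord (s v)))).1. Qed.

Lemma block_lt v : (block v < (n %/ M).+1)%N.
Proof. by rewrite ltnS leq_div2r // ltnW. Qed.

Lemma card_block b : (#|[set v | block v == b]| <= M)%N.
Proof.
have := @card_le_injective_range _ (fun v => val (s v)) [set v | block v == b]
  (b * M) (b * M + M).
rewrite addKn; apply; first by move=> x y _ _ /val_inj /perm_inj.
move=> v; rewrite inE /block => /eqP block_v.
by have := divn_eq (s v) M; have := ltn_pmod (s v) M_pos; rewrite block_v /=; lia.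
Qed.

Definition pair_part (i : nat) : {set 'I_n} := [set v | block_pair (block v) == i].

(* The vertices of [pair_part i] sent to [2 i - 1] when the blocks of pair [i]
   change orientation at block [F]. *)
Definition odd_side (i F : nat) : {set 'I_n} :=
  [set v in pair_part i | c v == (block v < F)%N].

Lemma odd_side_step i F :
  (#|odd_side i F.+1| <= #|odd_side i F| + M /\
   #|odd_side i F| <= #|odd_side i F.+1| + M)%N.
Proof.
have lt_off v : block v != F -> (block v < F.+1)%N = (block v < F)%N.
  by rewrite ltnS leq_eqVlt => /negbTE ->.
have sub G G' : G \in [:: F; F.+1] -> G' \in [:: F; F.+1] ->
    odd_side i G \subset odd_side i G' :|: [set v | block v == F].
  move=> G_F G'_F; apply/subsetP => v; rewrite !inE.
  case: (eqVneq (block v) F) => [_|offF]; rewrite ?orbT // orbF.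
  move: G_F G'_F; rewrite !inE => /orP[]/eqP-> /orP[]/eqP->;
  by rewrite ?(lt_off v offF).
have card_sub G G' : G \in [:: F; F.+1] -> G' \in [:: F; F.+1] ->
    (#|odd_side i G| <= #|odd_side i G'| + M)%N.
  move=> G_F G'_F; apply: leq_trans (subset_leq_card (sub G G' G_F G'_F)) _.
  by apply: leq_trans (leq_card_setU _ _) _; rewrite leq_add2l card_block.
by split; apply: card_sub; rewrite !inE eqxx ?orbT.
Qed.

Lemma odd_side_ends i :
  (#|odd_side i 0| + #|odd_side i (n %/ M).+1| = #|pair_part i|)%N.
Proof.
rewrite -(cardsID [set v | c v] (pair_part i)) addnC; congr (_ + _)%N;
  apply: eq_card => v; rewrite !inE ?block_lt ?ltn0;
  by case: (c v); rewrite ?andbT ?andbF.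
Qed.

Definition balanced (i F : nat) : bool :=
  (#|pair_part i| <= 2 * #|odd_side i F| + 2 * M)%N &&
  (2 * #|odd_side i F| <= #|pair_part i| + 2 * M)%N.

Lemma balanced_exists i : exists F, balanced i F.
Proof.
have step F : (2 * #|odd_side i F.+1| <= 2 * #|odd_side i F| + 2 * M /\
               2 * #|odd_side i F| <= 2 * #|odd_side i F.+1| + 2 * M)%N.
  by have := odd_side_step i F; lia.
have between :
    (2 * #|odd_side i 0| <= #|pair_part i| <= 2 * #|odd_side i (n %/ M).+1| \/
     2 * #|odd_side i (n %/ M).+1| <= #|pair_part i| <= 2 * #|odd_side i 0|)%N.
  by have := odd_side_ends i; lia.
have [F F_bal] := @discrete_ivt (fun F => 2 * #|odd_side i F|)%N _ _ _ step between.
by exists F; apply/andP; lia.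
Qed.

Definition threshold (i : nat) : nat := xchoose (balanced_exists i).

Definition orientation (b : nat) : bool := (b < threshold (block_pair b))%N.

Local Notation sched := (schedule k i1 i2 block_pair orientation).

Definition label (v : 'I_n) : nat :=
  let x := sched (zone D M w (s v)) in
  if c v then x.1 else x.2.

Definition transition_set : {set 'I_n} := [set v | s v %% M < D * w]%N.

Lemma schedule_zone_adj p : (p < n)%N ->
  state_adj k i1 i2 (sched (zone D M w p)) (sched (zone D M w p).+1).
Proof.
by move=> ltpn; apply: schedule_adj => //; [exact: admissible_block | exact: geq_minr].
Qed.

Lemma label_hom : hom_to_cycle_chord e k i1 i2 label.
Proof.
have zone_edge p : (p < n)%N ->
    target_edge k i1 i2 (sched (zone D M w p)).1 (sched (zone D M w p)).2.
  by move=> /schedule_zone_adj /and4P[].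
split=> [v|u v uv].
  have [] := target_edge_range i1_range i2_range (zone_edge _ (ltn_ord (s v))).
  by rewrite /label; case: (c v).
rewrite -/(target_edge k i1 i2 (label u) (label v)).
suff close x y : c x != c y -> (s x <= s y < s x + w)%N ->
    target_edge k i1 i2 (label x) (label y).
  have [lt_uv lt_vu] := s_bandwidth uv; have c_uv := c_proper uv.
  have [le_uv|lt_vu'] := leqP (s u) (s v); first by apply: close; lia.
  by rewrite target_edgeC; apply: close; rewrite 1?eq_sym //; lia.
move=> c_xy near_xy; have := schedule_zone_adj (ltn_ord (s x)); rewrite /label.
case: (zone_step w_gt0 zones_fit near_xy) => -> /and4P[edge_x _ edge_xy edge_yx].
  by move: c_xy edge_x; case: (c x); case: (c y) => //= _; rewrite target_edgeC.
by move: c_xy; case: (c x); case: (c y).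
Qed.

Lemma label_near_tail x y : x \notin transition_set ->
  (s x <= s y < s x + w \/ s y <= s x < s y + w)%N ->
  label y = (if c y == orientation (block x)
             then (2 * block_pair (block x)).-1 else 2 * block_pair (block x))%N.
Proof.
rewrite inE -leqNgt /label => tail_x near_xy.
have adm := admissible_block (ltn_ord (s x)).
have [|->|[t t_range ->]] := zone_near_tail w_gt0 zones_fit _ tail_x near_xy.
- lia.
- rewrite schedule_block_start /block_state /state.
  by case: (c y); case: (orientation _).
- rewrite schedule_block_end // /block_state /state.
  by case: (c y); case: (orientation _).
Qed.

Lemma label_pair_edge u v : e u v ->
  ~~ ((u \in transition_set) && (v \in transition_set)) ->
  exists i, (1 <= i <= k)%N /\
    ((label u = (2 * i).-1 /\ label v = 2 * i) \/
     (label u = 2 * i /\ label v = (2 * i).-1))%N.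
Proof.
move=> uv not_both; have [lt_uv lt_vu] := s_bandwidth uv.
have [x tail_x [near_xu near_xv]] : exists2 x, x \notin transition_set &
    (s x <= s u < s x + w \/ s u <= s x < s u + w)%N /\
    (s x <= s v < s x + w \/ s v <= s x < s v + w)%N.
  by case/nandP: not_both => tail; [exists u | exists v] => //; lia.
exists (block_pair (block x)); split; first exact: block_pair_range.
rewrite (label_near_tail tail_x near_xu) (label_near_tail tail_x near_xv).
by move: (c_proper uv); case: (c u); case: (c v); case: (orientation _) => //= _;
  [left | right | right | left].
Qed.

Lemma card_transition_set : (#|transition_set| <= (n %/ M).+1 * (D * w))%N.
Proof.
set Dw := (D * w)%N; have Dw_gt0 : (0 < Dw)%N by rewrite muln_gt0 w_gt0 addn3.
have := @card_le_injective_range _ (fun v => block v * Dw + s v %% M)%N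
  transition_set 0 ((n %/ M).+1 * Dw).
rewrite subn0; apply=> [x y | v].
  rewrite !inE => head_x head_y /= eq_xy.
  have eq_block : block x = block y.
    by have := congr1 (divn^~ Dw) eq_xy; rewrite /= !divnMDl // !divn_small // !addn0.
  have eq_mod : (s x %% M = s y %% M)%N by move: eq_xy; rewrite eq_block => /addnI.
  apply: (@perm_inj _ s); apply: val_inj => /=.
  rewrite (divn_eq (s x) M) (divn_eq (s y) M) -/(block x) -/(block y).
  by rewrite eq_block eq_mod.
rewrite inE => head_v /=.
have : ((block v).+1 * Dw <= (n %/ M).+1 * Dw)%N by rewrite leq_mul2r block_lt orbT.
by rewrite mulSn; lia.
Qed.

Lemma card_pair_part i : (1 <= i <= k)%N ->
  (#|pair_part i| <= n_ (2 * i).-1 + n_ (2 * i) + M)%N.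
Proof.
move=> i_range.
have := @card_le_injective_range _ (fun v => val (s v)) (pair_part i)
  (prefix_size i.-1) (prefix_size i + M).
have -> : (prefix_size i + M - prefix_size i.-1 = n_ (2 * i).-1 + n_ (2 * i) + M)%N.
  by rewrite (@prefix_sizeE i); lia.
apply; first by move=> x y _ _ /val_inj /perm_inj.
move=> v; rewrite inE => /eqP pair_v /=.
have [_] := block_pairP (leq_ltn_trans (leq_divM _ _) (ltn_ord (s v))).
rewrite -/(block v) pair_v.
have := leq_divM (s v) M; have := ltn_ceil (s v) M_pos; rewrite -/(block v) mulSn.
lia.
Qed.

Lemma card_label_odd i : (1 <= i <= k)%N ->
  (#|[set v | label v == (2 * i).-1]| <=
     #|transition_set| + #|odd_side i (threshold i)|)%N.
Proof.
move=> i_range; apply: leq_trans (leq_card_setU _ _); apply: subset_leq_card.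
apply/subsetP => v; rewrite inE in_setU => /eqP label_v.
case: (boolP (v \in transition_set)) => //= tail_v; move: label_v.
rewrite (label_near_tail tail_v (or_introl _)) ?leqnn /=; last by lia.
have := block_pair_range v; case: ifP => [/eqP c_v|_] P_range label_v; last by lia.
have P_i : block_pair (block v) = i by lia.
by rewrite !inE -P_i eqxx c_v /orientation eqxx.
Qed.

Lemma card_label_even i : (1 <= i <= k)%N ->
  (#|[set v | label v == 2 * i]| + #|odd_side i (threshold i)| <=
     #|transition_set| + #|pair_part i|)%N.
Proof.
move=> i_range; have sub_odd : odd_side i (threshold i) \subset pair_part i.
  by apply/subsetP => v; rewrite inE => /andP[].
rewrite -(cardsID (odd_side i (threshold i)) (pair_part i)) (setIidPr sub_odd).
suff : (#|[set v | label v == 2 * i]| <=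
          #|transition_set| + #|pair_part i :\: odd_side i (threshold i)|)%N by lia.
apply: leq_trans (leq_card_setU _ _); apply: subset_leq_card.
apply/subsetP => v; rewrite inE in_setU => /eqP label_v.
case: (boolP (v \in transition_set)) => //= tail_v; move: label_v.
rewrite (label_near_tail tail_v (or_introl _)) ?leqnn /=; last by lia.
have := block_pair_range v; case: ifP => [_|/negbT c_v] P_range label_v; first by lia.
have P_i : block_pair (block v) = i by lia.
by move: c_v; rewrite !inE -P_i eqxx andbT.
Qed.

Lemma card_label_pair i : (1 <= i <= k)%N ->
  (2 * #|[set v | label v == (2 * i).-1]| <=
     2 * #|transition_set| + n_ (2 * i).-1 + n_ (2 * i) + 3 * M)%N /\
  (2 * #|[set v | label v == 2 * i]| <=
     2 * #|transition_set| + n_ (2 * i).-1 + n_ (2 * i) + 3 * M)%N.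
Proof.
move=> i_range; have /andP[bal_lo bal_hi] := xchooseP (balanced_exists i).
have := card_label_odd i_range; have := card_label_even i_range.
have := card_pair_part i_range; rewrite /threshold; lia.
Qed.

Lemma block_labelling : exists (S : {set 'I_n}) (f : 'I_n -> nat),
  [/\ hom_to_cycle_chord e k i1 i2 f,
      (#|S| <= (n %/ M).+1 * (D * w))%N,
      forall i, (1 <= i <= k)%N ->
        (2 * #|[set v | f v == (2 * i).-1]| <=
           2 * #|S| + n_ (2 * i).-1 + n_ (2 * i) + 3 * M)%N /\
        (2 * #|[set v | f v == 2 * i]| <=
           2 * #|S| + n_ (2 * i).-1 + n_ (2 * i) + 3 * M)%N &
      forall u v, e u v -> ~~ ((u \in S) && (v \in S)) ->
        exists i, (1 <= i <= k)%N /\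
          ((f u = (2 * i).-1 /\ f v = 2 * i) \/
           (f u = 2 * i /\ f v = (2 * i).-1))%N].
Proof.
exists transition_set, label; split.
- exact: label_hom.
- exact: card_transition_set.
- exact: card_label_pair.
- exact: label_pair_edge.
Qed.

End BlockLabelling.

Import Order.TTheory GRing.Theory Num.Theory.
Local Open Scope ring_scope.

Lemma bandwidth_lt (R : realType) n (e : rel 'I_n) (b : R) (w : nat) :
  b < w%:R -> bandwidth_le e b ->
  exists s : {perm 'I_n}, forall u v, e u v -> (s u < s v + w)%N /\ (s v < s u + w)%N.
Proof.
move=> ltbw [s s_band]; exists s => u v uv.
have := s_band u v uv; rewrite ler_norml => /andP[lo hi].
by split; rewrite -(ltr_nat R) natrD; lra.
Qed.

Lemma block_length_choice (R : realType) (D : nat) (xi : R) : 0 < xi ->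
  exists (beta : R) (n0 : nat), 0 < beta /\ forall n, (n0 <= n)%N ->
    exists w M : nat, [/\ (0 < w)%N, (D.+1 * w <= M)%N, beta * n%:R < w%:R,
      M%:R <= xi * n%:R / 4 & ((n %/ M).+1 * (D * w))%N%:R <= xi * n%:R / 4].
Proof.
(* With blocks of length M = (D + 1) K w and K > 8 / xi, the transition regions
   cover a fraction below xi / 8 of the positions; beta is chosen so that
   M <= xi n / 8 once n is large. *)
move=> xi_gt0; set K := (Num.truncn (8 / xi)).+1; set E := (D.+1 * K)%N.
have E_gt0 : 0 < E%:R :> R by rewrite ltr0n muln_gt0.
have K_xi : 8 <= K%:R * xi by rewrite -ler_pdivrMr //; apply/ltW/truncnS_gt.
exists (xi / (16 * E%:R)), (Num.truncn (16 * E%:R / xi)).+1.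
split=> [|n n0_le]; first by apply: divr_gt0 => //; lra.
set N := n%:R : R; have N_ge0 : 0 <= N by rewrite /N ler0n.
have EN : 16 * E%:R <= xi * N.
  have : 16 * E%:R / xi < N.
    by apply: lt_le_trans (truncnS_gt _) _; rewrite /N ler_nat.
  by rewrite ltr_pdivrMr // => ?; lra.
set w := (Num.truncn (xi / (16 * E%:R) * N)).+1.
have w_le : w%:R <= xi / (16 * E%:R) * N + 1.
  rewrite /w -addn1 natrD lerD2r truncn_le.
  by apply: mulr_ge0 => //; apply: divr_ge0; lra.
have M_le : (E * w)%N%:R <= xi * N / 8.
  rewrite natrM; apply: le_trans (_ : _ <= E%:R * (xi / (16 * E%:R) * N + 1)) _.
    by rewrite ler_pM2l.
  have -> : E%:R * (xi / (16 * E%:R) * N + 1) = xi * N / 16 + E%:R by field; lra.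
  lra.
exists w, (E * w)%N; split=> //; first by rewrite /E mulnAC leq_pmulr.
- exact: truncnS_gt.
- lra.
set T := (n %/ (E * w) * (D * w))%N.
have KT : (K * T <= n)%N.
  apply: leq_trans (leq_divM n (E * w)); rewrite /T mulnCA leq_mul2l /E.
  by apply/orP; right; nia.
have T_le : T%:R <= xi * N / 8.
  have : K%:R * T%:R <= N :> R by rewrite -natrM ler_nat.
  have : 0 <= T%:R :> R by [].
  nra.
have Dw_le : (D * w)%N%:R <= (E * w)%N%:R :> R by rewrite ler_nat /E; nia.
rewrite mulSn natrD -/T; lra.
Qed.

Lemma pair_load_le (R : realType) (xi N : R) (a b L S M : nat) :
  (2 * L <= 2 * S + a + b + 3 * M)%N -> `|a%:R - b%:R| <= xi / 2 * N ->
  S%:R <= xi * N / 4 -> M%:R <= xi * N / 4 ->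
  L%:R <= a%:R + xi * N /\ L%:R <= b%:R + xi * N.
Proof.
move=> L_le; rewrite ler_norml => /andP[ab_lo ab_hi] S_le M_le.
have : (L + L <= S + S + a + b + M + M + M)%N by lia.
by rewrite -(ler_nat R) !natrD => ?; split; lra.
Qed.

Unset Implicit Arguments.

Theorem lemma8p1 (R : realType) (Delta k : nat) (xi : R) :
  0 < xi ->
  exists (lambda beta : R) (n0 : nat), 0 < lambda /\ 0 < beta /\
  forall (n : nat) (e : rel 'I_n) (n_ : nat -> nat) (i1 i2 : nat),
    (n0 <= n)%N ->
    simple_graph e -> bipartite e ->
    bandwidth_le e (beta * n%:R) -> max_deg_le e Delta ->
    (\sum_(1 <= i < (2 * k).+1) n_ i)%N = n ->
    (forall i, (1 <= i <= 2 * k)%N -> n%:R / (3 * k)%:R < (n_ i)%:R :> R) ->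
    (forall i, (1 <= i <= k)%N ->
       `| (n_ (2 * i).-1)%:R - (n_ (2 * i)%N)%:R | <= lambda * n%:R) ->
    (1 <= i1 <= k)%N -> (1 <= i2 <= k)%N -> i1 != i2 ->
    exists (S : {set 'I_n}) (f : 'I_n -> nat),
      hom_to_cycle_chord e k i1 i2 f /\
      (#|S|%:R <= xi * n%:R) /\
      (forall i, (1 <= i <= 2 * k)%N ->
         #|[set v | f v == i]|%:R <= (n_ i)%:R + xi * n%:R) /\
      (forall u v, e u v -> ~~ ((u \in S) && (v \in S)) ->
         exists i, (1 <= i <= k)%N /\
           ((f u = (2 * i).-1 /\ f v = 2 * i)%N \/
            (f u = 2 * i /\ f v = (2 * i).-1)%N)).
Proof.
move=> xi_gt0.
have [beta [n0 [beta_gt0 block_len]]] := block_length_choice (12 * k + 3) xi_gt0.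
exists (xi / 2), beta, n0; split; first lra; split=> //.
move=> n e n_ i1 i2 n0_le _ [c c_proper] band _ sum_n _ balance i1_range i2_range _.
have [w [M [w_gt0 zones_fit beta_w M_le S_bound]]] := block_len n n0_le.
have [s s_band] := bandwidth_lt beta_w band.
have [S [f [f_hom S_card f_card f_pair]]] :=
  block_labelling w_gt0 zones_fit c_proper s_band sum_n i1_range i2_range.
have S_le : #|S|%:R <= xi * n%:R / 4 by apply: le_trans S_bound; rewrite ler_nat.
exists S, f; split=> //; split; first by have := ler0n R #|S|; lra.
split=> // j j_range.
have [i [i_range [->|->]]] :
    exists i, (1 <= i <= k)%N /\ (j = (2 * i).-1 \/ j = 2 * i)%N.
  by exists (j.+1 %/ 2)%N; lia.
all: have [odd_le even_le] := f_card i i_range.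
- exact: (pair_load_le odd_le (balance i i_range) S_le M_le).1.
- exact: (pair_load_le even_le (balance i i_range) S_le M_le).2.
Qed.
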